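(* Let $N\ge 1$, $\alpha=(\alpha_1,\dots,\alpha_N)\in\mathbb R^N$, and let $\dot W$ be a real symmetric $N\times N$ matrix with $\dot W_{ij}\ge 0$ for $i\neq j$ and $\sum_{j=1}^N\dot W_{ij}=0$ for every $i$. Put $W_\varepsilon=\mathrm{Id}+\varepsilon\dot W$ and let $\mathcal P_\varepsilon$ be the operator defined in the context. Fix $k\in\mathbb Z$. (1) For every $\varepsilon>0$, the operator $\mathcal P_\varepsilon:L^2(M)\to L^2(M)$ has $N$ eigenvalues $\lambda^{(1)}_{k,\varepsilon},\dots,\lambda^{(N)}_{k,\varepsilon}$ (counted with algebraic multiplicity) with $N$ linearly independent (generalised) eigenfunctions $F^{(\ell)}_{k,\varepsilon}$ of the separable form $F^{(\ell)}_{k,\varepsilon}(j,x)=f^{(\ell)}_{k,\varepsilon}(j)\,e^{2\pi i k x}$, $\ell=1,\dots,N$, where $f^{(\ell)}_{k,\varepsilon}:\{1,\dots,N\}\to\mathbb C$. (2) For all sufficiently small $\varepsilon>0$, these eigenvalues can be labelled so that $$\bigl|\lambda^{(\ell)}_{k,\varepsilon}-e^{-2\pi i k\alpha_\ell}\bigr|\le 2\max_{1\le m\le N}|\dot W_{mm}|\,\varepsilon\qquad\text{for all }\ell\in\{1,\dots,N\}.$$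
   Context: $\mathbb S^1=\mathbb R/\mathbb Z$, $M=\{1,\dots,N\}\times\mathbb S^1$, equipped with the product $m$ of the uniform probability measure on $\{1,\dots,N\}$ and Lebesgue measure on $\mathbb S^1$; $L^2(M)$ is the complex Hilbert space $L^2(M,m)$. For $\varepsilon\ge 0$ the (noisy rotation) transfer operator is $(\mathcal P_\varepsilon F)(j,x)=\sum_{j'=1}^N (W_\varepsilon)_{jj'}\,F(j',x-\alpha_j)$ for $F\in L^2(M)$, $(j,x)\in M$. A generalised eigenfunction with eigenvalue $\lambda$ is a nonzero $F$ with $(\mathcal P_\varepsilon-\lambda)^nF=0$ for some $n\ge1$. *)

From HB Require Import structures.
From mathcomp Require Import all_boot all_order all_algebra.
From mathcomp Require Import all_classical all_reals.
From mathcomp Require Import trigo.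
From mathcomp.real_closed Require Import complex.
Set Implicit Arguments. Unset Strict Implicit. Unset Printing Implicit Defensive.
Import Order.TTheory GRing.Theory Num.Theory.
Local Open Scope ring_scope.
Local Open Scope complex_scope.

Definition e2pi {R : realType} (t : R) : R[i] :=
  Complex (cos (2 * pi * t)) (sin (2 * pi * t)).

(* Functions on M = {1..N} x S^1, with S^1 = R/Z represented by 1-periodic
   functions of x : R (all functions considered below are 1-periodic). *)
Definition Mfun (R : realType) (N : nat) := 'I_N -> R -> R[i].

Definition transfer {R : realType} {N : nat} (alpha : 'I_N -> R) (W : 'M[R]_N)
  (F : Mfun R N) : Mfun R N :=
  fun j x => \sum_(j' < N) (W j j')%:C * F j' (x - alpha j).

Definition Weps {R : realType} {N : nat} (Wdot : 'M[R]_N) (eps : R) : 'M[R]_N :=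
  1%:M + eps *: Wdot.

Definition gen_eigenfunction {R : realType} {N : nat} (P : Mfun R N -> Mfun R N)
  (lam : R[i]) (F : Mfun R N) : Prop :=
  (exists j x, F j x != 0) /\
  exists n : nat, (0 < n)%N /\
    forall j x, iter n (fun G : Mfun R N => fun j x => P G j x - lam * G j x) F j x = 0.

Definition lin_indep {R : realType} {N : nat} (Fs : 'I_N -> Mfun R N) : Prop :=
  forall c : 'I_N -> R[i],
    (forall j x, \sum_(l < N) c l * Fs l j x = 0) -> forall l, c l = 0.

Definition sep_fun {R : realType} {N : nat} (k : int) (f : 'I_N -> R[i]) : Mfun R N :=
  fun j x => f j * e2pi (k%:~R * x).

Definition mode_spectrum {R : realType} {N : nat} (alpha : 'I_N -> R)
  (Wdot : 'M[R]_N) (eps : R) (k : int)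
  (lam : 'I_N -> R[i]) (f : 'I_N -> 'I_N -> R[i]) : Prop :=
  (forall l, gen_eigenfunction (transfer alpha (Weps Wdot eps)) (lam l) (sep_fun k (f l)))
  /\ lin_indep (fun l => sep_fun k (f l)).

(* On the Fourier mode [e(k x)] the transfer operator acts on [f : 'I_N -> C]
   as a matrix [B_eps], diagonal at [eps = 0] with entries [e(- k alpha_j)].
   (1) is the existence of a basis of generalised eigenvectors of [B_eps]: after
   a Schur triangularisation, the generalised eigenspaces have the dimensions
   of the multiplicities on the diagonal, and they span.
   (2) Because the rows of [Wdot] sum to zero, Gershgorin's discs put every
   eigenvalue within [2 eps |Wdot_jj|] of some [e(- k alpha_j)].  The number of
   eigenvalues near each value is obtained from the traces of the powers of
   [B_eps] by Lagrange interpolation; these traces are polynomial in [eps], so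
   for small [eps] the counts agree with those at [eps = 0], which yields the
   labelling. *)

From HB Require Import structures.
From mathcomp Require Import all_boot all_order all_algebra.
From mathcomp Require Import all_classical all_reals.
From mathcomp Require Import trigo.
From mathcomp.real_closed Require Import complex.
From mathcomp Require Import spectral perm ring lra.
Set Implicit Arguments. Unset Strict Implicit. Unset Printing Implicit Defensive.
Import Order.TTheory GRing.Theory Num.Theory.
Local Open Scope ring_scope.

Lemma sum_count_mem_undup (T : eqType) (s : seq T) :
  (\sum_(x <- undup s) count_mem x s)%N = size s.
Proof.
rewrite -(perm_size (perm_count_undup s)) size_flatten /shape -map_comp.
by rewrite sumnE big_map; apply: eq_bigr => x _ /=; rewrite size_nseq.
Qed.

Section TriangularProducts.
Variables (R : pzRingType) (n : nat).
Implicit Types A B : 'M[R]_n.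

Lemma trig_mulmx A B : is_trig_mx A -> is_trig_mx B ->
  is_trig_mx (A *m B) /\ forall i, (A *m B) i i = A i i * B i i.
Proof.
move=> /is_trig_mxP hA /is_trig_mxP hB; split.
  apply/is_trig_mxP => i j lij; rewrite !mxE big1 // => k _.
  case: (ltnP i k) => [lik|lki]; first by rewrite hA ?mul0r.
  by rewrite hB ?mulr0 //; exact: leq_ltn_trans lki lij.
move=> i; rewrite !mxE (bigD1 i) //= big1 ?addr0 // => k nki.
case: (ltngtP i k) => [lik|lki|eik]; first by rewrite hA ?mul0r.
  by rewrite hB ?mulr0.
by rewrite (ord_inj eik) eqxx in nki.
Qed.

Lemma trig_mxexp A m : is_trig_mx A ->
  is_trig_mx (A ^+ m) /\ forall i, (A ^+ m) i i = A i i ^+ m.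
Proof.
move=> hA; elim: m => [|m [IH1 IH2]].
  rewrite expr0 (_ : 1 = 1%:M) //; split; first exact: scalar_mx_is_trig.
  by move=> i; rewrite !mxE eqxx.
rewrite exprS -mulmxE; have [h1 h2] := trig_mulmx hA IH1; split => // i.
by rewrite h2 IH2 exprS.
Qed.

Lemma trig_subr_scalar A a : is_trig_mx A ->
  is_trig_mx (A - a%:M) /\ forall i, (A - a%:M) i i = A i i - a.
Proof.
move=> /is_trig_mxP hA; split; last by move=> i; rewrite !mxE eqxx mulr1n.
apply/is_trig_mxP => i j lij.
by rewrite !mxE hA // (_ : i == j = false) ?mulr0n ?subr0 //; exact: ltn_eqF.
Qed.

End TriangularProducts.

Lemma mxrank_trig_ge (F : fieldType) n (M : 'M[F]_n) : is_trig_mx M ->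
  (#|[set i | M i i != 0%R]| <= \rank M)%N.
Proof.
move=> /is_trig_mxP hM; set S := [set i | M i i != 0%R].
pose f : 'I_#|S| -> 'I_n := enum_val.
suff free : row_free (rowsub f M).
  by rewrite -(eqP free); exact: mxrankS (rowsub_sub f M).
rewrite -kermx_eq0; apply/rowV0P => v /sub_kermxP hv.
apply/rowP => a0; rewrite mxE; apply/eqP; apply/negPn/negP => va0.
(* at the nonzero coordinate of v with the largest row index, column [f a] of
   [v *m rowsub f M] reduces to its diagonal term *)
have [a va amax] :=
  @arg_maxnP _ a0 (fun a => v 0 a != 0) (fun a => (f a : nat)) va0.
move/rowP: hv => /(_ (f a)); rewrite !mxE (bigD1 a) //= big1 ?addr0.
  move/eqP; rewrite mxE mulf_eq0 (negbTE va) /=.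
  by have := enum_valP a; rewrite inE => /negbTE ->.
move=> b nba; rewrite mxE.
have [->|vb] := eqVneq (v 0 b) 0; first by rewrite mul0r.
rewrite hM ?mulr0 // ltn_neqAle (amax b vb : (f b <= f a)%N) andbT.
by apply: contraNneq nba => /ord_inj /enum_val_inj ->.
Qed.

Section TriangularGeigenspaces.
Variables (F : fieldType) (n : nat) (T : 'M[F]_n.+1).
Hypothesis T_trig : is_trig_mx T.

Let diagT := [seq T i i | i <- enum 'I_n.+1].
Let spectrum := undup diagT.

Lemma mxrank_geigenspace_trig_le a :
  (\rank (geigenspace T a) <= #|[set i | T i i == a]|)%N.
Proof.
have [trigB diagB] := trig_subr_scalar a T_trig.
have [trigBn diagBn] := trig_mxexp n.+1 trigB.
have := mxrank_trig_ge trigBn.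
have -> : [set i | ((T - a%:M) ^+ n.+1) i i != 0%R] = ~: [set i | T i i == a].
  by apply/setP => i; rewrite !inE diagBn diagB expf_eq0 /= subr_eq0.
move=> rk; rewrite geigenspaceE mxrank_ker leq_subLR addnC.
by apply: leq_trans (leq_add (leqnn _) rk); rewrite cardsC card_ord.
Qed.

Lemma sum_geigenspace_spectrum_full :
  (1%:M <= \sum_(j < size spectrum) geigenspace T spectrum`_j)%MS.
Proof.
pose q := \prod_(j < size spectrum) ('X - (spectrum`_j)%:P) ^+ n.+1.
have char_dvd_q : char_poly T %| q.
  have -> : char_poly T = \prod_(x <- spectrum) ('X - x%:P) ^+ count_mem x diagT.
    by rewrite char_poly_trig // prodr_undup_exp_count big_map big_enum.
  rewrite (big_nth 0) big_mkord.
  apply: (big_ind2 (fun p r => p %| r)) => [|? ? ? ?|j _]; first exact: dvdpp.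
    exact: dvdp_mul.
  by rewrite dvdp_exp2l // (leq_trans (count_size _ _)) // size_map size_enum_ord.
have qT0 : horner_mx T q = 0.
  by have /dvdpP [r ->] := char_dvd_q; rewrite rmorphM /= Cayley_Hamilton mulr0.
rewrite -kermxpoly_prod => [|i j _ _ nji].
  by rewrite /kermxpoly qT0 kermx0.
rewrite coprimep_expr // coprimep_expl // coprimep_XsubC root_XsubC.
by rewrite nth_uniq ?undup_uniq // eq_sym.
Qed.

Lemma mxrank_geigenspace_trig a :
  \rank (geigenspace T a) = #|[set i | T i i == a]|.
Proof.
have [a_spec|a_nspec] := boolP (a \in spectrum); last first.
  have no_i : #|[set i | T i i == a]| = 0%N.
    apply: eq_card0 => i; rewrite !inE; apply: contraNF a_nspec => /eqP <-.
    by rewrite mem_undup; apply: map_f; rewrite mem_enum.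
  by apply/eqP; rewrite no_i -leqn0 -no_i mxrank_geigenspace_trig_le.
pose cnt j := #|[set i | T i i == spectrum`_j]|.
have sum_cnt : (\sum_(j < size spectrum) cnt j)%N = n.+1.
  rewrite -[RHS](size_enum_ord n.+1) -(size_map (fun i => T i i)).
  rewrite -(sum_count_mem_undup diagT).
  rewrite [RHS](big_nth 0) big_mkord; apply: eq_bigr => j _.
  rewrite /cnt count_map -sum1_count -sum1_card big_enum_cond.
  by apply: eq_bigl => i; rewrite !inE.
pose rk j := \rank (geigenspace T spectrum`_j).
have sum_rk : (\sum_(j < size spectrum) rk j)%N = n.+1.
  have /mxdirectP <- /= :
      mxdirect (\sum_(j < size spectrum) geigenspace T spectrum`_j).
    apply: mxdirect_sum_geigenspace => i j _ _ /eqP.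
    by rewrite nth_uniq ?undup_uniq // => /eqP/val_inj.
  by move: sum_geigenspace_spectrum_full; rewrite sub1mx => /eqP.
have rk_le (j : 'I_(size spectrum)) (_ : true) :
    (rk j <= cnt j ?= iff (rk j == cnt j))%N.
  exact/leqif_eq/mxrank_geigenspace_trig_le.
move: (leqif_sum rk_le) => /geq_leqif.
rewrite sum_rk sum_cnt leqnn => /esym/forall_inP.
have a_idx : (index a spectrum < size spectrum)%N by rewrite index_mem.
by move=> /(_ (Ordinal a_idx) isT) /eqP; rewrite /rk /cnt /= nth_index.
Qed.

Lemma sum_geigenspace_trig_full :
  (1%:M <= \sum_(i < n.+1) geigenspace T (T i i))%MS.
Proof.
apply: submx_trans sum_geigenspace_spectrum_full _; apply/sumsmx_subP => j _.
have /mapP [i _ ->] : spectrum`_j \in diagT.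
  by rewrite -mem_undup mem_nth.
exact: (sumsmx_sup i).
Qed.

End TriangularGeigenspaces.

Lemma eigenvalue_geigenvector (F : fieldType) n (B : 'M[F]_n) a (v : 'rV[F]_n) m :
  v != 0 -> v *m (B - a%:M) ^+ m = 0 -> eigenvalue B a.
Proof.
move=> vn0 vBa; apply: contraNT vn0 => /negPn; rewrite kermx_eq0 => free_Ba.
elim: m vBa => [|m IH]; first by rewrite expr0 mulmx1 => ->.
by rewrite exprSr -mulmxE mulmxA => /eqP; rewrite mulmx_free_eq0 // => /eqP.
Qed.

Lemma row_unitmx_neq0 (F : fieldType) n (P : 'M[F]_n) i :
  P \in unitmx -> row i P != 0.
Proof.
rewrite -row_free_unit => Pfree; rewrite rowE mulmx_free_eq0 //.
by apply/eqP => /matrixP /(_ 0 i); rewrite !mxE !eqxx => /eqP; rewrite oner_eq0.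
Qed.

Lemma rV_neq0_coord (F : nmodType) n (v : 'rV[F]_n) :
  v != 0 -> exists j, v 0 j != 0.
Proof.
move=> vn0; apply/existsP; apply: contraNT vn0 => /existsPn v0.
by apply/eqP/rowP => j; rewrite mxE; apply/eqP/negbNE.
Qed.

Lemma labelled_row_basis (F : fieldType) n (t : 'I_n -> F) (V : F -> 'M[F]_n) :
  (forall a, \rank (V a) = #|[set i | t i == a]|) ->
  (1%:M <= \sum_i V (t i))%MS ->
  exists2 P : 'M[F]_n, P \in unitmx & forall i, (row i P <= V (t i))%MS.
Proof.
move=> rankV fullV.
pose cls a := enum [set i | t i == a].
pose basis a := [seq row k (row_base (V a)) | k <- enum 'I_(\rank (V a))].
have size_basis a : size (basis a) = size (cls a).
  by rewrite size_map size_enum_ord rankV cardE.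
have cls_t i : i \in cls (t i) by rewrite mem_enum inE.
(* row i of P is the basis vector of V (t i) at the position of i in its class *)
pose P := \matrix_i (basis (t i))`_(index i (cls (t i))).
have rowP_basis i : row i P \in basis (t i).
  by rewrite rowK mem_nth // size_basis index_mem.
have rowP_sub i : (row i P <= V (t i))%MS.
  have /mapP [k _ ->] := rowP_basis i.
  by rewrite -(eq_row_base (V (t i))) row_sub.
exists P => //; rewrite -row_full_unit -sub1mx.
apply: submx_trans fullV _; apply/sumsmx_subP => i0 _.
rewrite -(eq_row_base (V (t i0))); apply/row_subP => k.
have k_cls : (k < size (cls (t i0)))%N.
  by rewrite -size_basis size_map size_enum_ord.
set i := nth i0 (cls (t i0)) k.
have ti : t i = t i0 by have := mem_nth i0 k_cls; rewrite mem_enum inE => /eqP.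
have -> : row k (row_base (V (t i0))) = row i P.
  rewrite rowK ti index_uniq ?enum_uniq // (nth_map k) ?size_enum_ord //.
  by rewrite nth_ord_enum.
exact: row_sub.
Qed.

Lemma mulmx_exp_intertwine (R : pzRingType) n (Q X Y : 'M[R]_n) m :
  Q *m X = Y *m Q -> Q *m X ^+ m = Y ^+ m *m Q.
Proof.
move=> QXY; elim: m => [|m IH]; first by rewrite !expr0 mulmx1 mul1mx.
by rewrite !exprS -!mulmxE mulmxA QXY -mulmxA IH mulmxA.
Qed.

Lemma geigen_basis (C : numClosedFieldType) n (B : 'M[C]_n.+1) :
  exists (t : 'I_n.+1 -> C) (P : 'M[C]_n.+1),
  [/\ P \in unitmx, forall i, row i P *m (B - (t i)%:M) ^+ n.+1 = 0 &
      forall m, \tr (B ^+ m) = \sum_i t i ^+ m].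
Proof.
have [Q /unitarymx_unit Qu] := Schur B (ltn0Sn n).
rewrite /similar_to conjumx //; set T := Q *m B *m invmx Q => T_trig.
have QBT : Q *m B = T *m Q by rewrite /T mulmxKV.
have QBTa a : Q *m (B - a%:M) = (T - a%:M) *m Q.
  by rewrite mulmxBr mulmxBl QBT mul_mx_scalar mul_scalar_mx.
exists (fun i => T i i).
have [P0 P0u P0geigen] := labelled_row_basis (mxrank_geigenspace_trig T_trig)
  (sum_geigenspace_trig_full T_trig).
exists (P0 *m Q); split => [|i|m]; first by rewrite unitmx_mul P0u.
  rewrite row_mul -mulmxA (mulmx_exp_intertwine _ (QBTa _)) mulmxA.
  by have := P0geigen i; rewrite geigenspaceE => /sub_kermxP ->; rewrite mul0mx.
rewrite -[B ^+ m](mulKmx Qu) (mulmx_exp_intertwine _ QBT) mxtrace_mulC mulmxK //.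
by have [_ diagTm] := trig_mxexp m T_trig; apply: eq_bigr => i _; exact: diagTm.
Qed.

Lemma horner_trace_exp (C : comNzRingType) n (A : 'M[{poly C}]_n) x m :
  (\tr (A ^+ m)).[x] = \tr (map_mx (horner_eval x) A ^+ m).
Proof. by rewrite -rmorphXn /= trace_map_mx. Qed.

Lemma count_mem_mktuple (T : eqType) n (f : 'I_n -> T) z :
  count_mem z [tuple f i | i < n] = #|[set i | f i == z]|.
Proof.
rewrite count_map -sum1_count -sum1_card /= big_enum_cond.
by apply: eq_bigl => i; rewrite !inE.
Qed.

Lemma perm_of_fibres (T : eqType) n (a b : 'I_n -> T) :
  (forall i, exists j, b i = a j) ->
  (forall j, #|[set i | a i == a j]| = #|[set i | b i == a j]|) ->
  exists s : 'S_n, forall j, b (s j) = a j.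
Proof.
move=> b_in_a fibres.
pose ta := [tuple a j | j < n]; pose tb := [tuple b i | i < n].
have /tuple_permP [s ta_s] : perm_eq ta tb.
  apply/allP => z; rewrite mem_cat => /orP zab.
  have [j ->] : exists j, z = a j.
    case: zab => /tnthP [i ->]; rewrite tnth_mktuple; first by exists i.
    exact: b_in_a.
  by rewrite /= !count_mem_mktuple fibres.
exists s => j; have := congr1 (fun t => tnth t j) (val_inj ta_s).
by rewrite !tnth_mktuple => ->.
Qed.

Lemma natr_inj_norm_lt1 (C : numDomainType) (a b : nat) :
  `|a%:R - b%:R : C| < 1 -> a = b.
Proof.
wlog ab : a b / (b <= a)%N => [hw|].
  case/orP: (leq_total b a) => ba; first exact: hw.
  by rewrite distrC => /(hw _ _ ba) ->.
rewrite -natrB // normr_nat ltrn1 ltnS leqn0 subn_eq0 => ba.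
by apply/eqP; rewrite eqn_leq ab ba.
Qed.

Section PowerSumPerturbation.
Variable C : numClosedFieldType.
Implicit Types (p : {poly C}) (x y w : C).

Definition slope_bound p : C := \sum_(i < size p) `|p`_i.+1|.

Lemma slope_bound_ge0 p : 0 <= slope_bound p.
Proof. by apply: sumr_ge0 => i _. Qed.

Lemma horner_sub0_le p x : `|x| <= 1 -> `|p.[x] - p.[0]| <= `|x| * slope_bound p.
Proof.
move=> x1; rewrite horner_coef0 (horner_coef_wide x (leqnSn (size p))).
rewrite big_ord_recl /= expr0 mulr1 addrC addKr.
apply: le_trans (ler_norm_sum _ _ _) _; rewrite mulr_sumr; apply: ler_sum => i _.
rewrite normrM normrX mulrC exprS -mulrA ler_wpM2l //.
by rewrite -[leRHS]mul1r ler_wpM2r // exprn_ile1.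
Qed.

Lemma horner_shift_le p w y : `|y - w| <= 1 ->
  `|p.[y] - p.[w]| <= `|y - w| * slope_bound (p \Po ('X + w%:P)).
Proof.
move=> yw1; have shift z : p.[z] = (p \Po ('X + w%:P)).[z - w].
  by rewrite horner_comp hornerD hornerX hornerC subrK.
by rewrite [p.[y]]shift [p.[w]]shift subrr horner_sub0_le.
Qed.

Variables (n : nat) (om : 'I_n -> C).

Definition lagrange_indicator z : {poly C} :=
  \prod_(l | om l != z) (('X - (om l)%:P) * ((z - om l)^-1)%:P).

Lemma lagrange_indicator_om z l : (lagrange_indicator z).[om l] = (om l == z)%:R.
Proof.
rewrite horner_prod; have [->|ne] := eqVneq.
  apply: big1 => l' hl'; rewrite hornerM hornerXsubC hornerC mulfV //.
  by rewrite subr_eq0 eq_sym.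
by rewrite (bigD1 l) //= hornerM hornerXsubC subrr !mul0r.
Qed.

Lemma sum_lagrange_indicator (m : 'I_n -> 'I_n) z :
  \sum_i (lagrange_indicator z).[om (m i)] = #|[set i | om (m i) == z]|%:R.
Proof.
rewrite -sum1_card natr_sum [RHS]big_mkcond; apply: eq_bigr => i _ /=.
by rewrite lagrange_indicator_om inE; case: eqP.
Qed.

Lemma horner_power_sums (u : nat -> {poly C}) (g : {poly C}) x (t : 'I_n -> C) :
  (forall m, (u m).[x] = \sum_i t i ^+ m) ->
  (\sum_(m < size g) g`_m *: u m).[x] = \sum_i g.[t i].
Proof.
move=> ux; rewrite horner_sum.
under eq_bigr => m _ do rewrite hornerZ ux mulr_sumr.
by rewrite exchange_big /=; apply: eq_bigr => i _; rewrite horner_coef.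
Qed.

Lemma sum_horner_close (u : nat -> {poly C}) (g : {poly C}) x r (t : 'I_n -> C)
    (m : 'I_n -> 'I_n) :
  (forall m, (u m).[0] = \sum_l om l ^+ m) ->
  (forall m, (u m).[x] = \sum_i t i ^+ m) ->
  (forall i, `|t i - om (m i)| <= r) -> `|x| <= 1 -> r <= 1 ->
  `|\sum_l g.[om l] - \sum_i g.[om (m i)]| <=
    `|x| * slope_bound (\sum_(m < size g) g`_m *: u m) +
    r * (n%:R * \sum_l slope_bound (g \Po ('X + (om l)%:P))).
Proof.
move=> u0 ux near x1 r1; set q := \sum_(m < size g) _.
have -> : \sum_l g.[om l] - \sum_i g.[om (m i)] =
    (q.[0] - q.[x]) + (\sum_i g.[t i] - \sum_i g.[om (m i)]).
  by rewrite (horner_power_sums _ u0) (horner_power_sums _ ux) addrA subrK.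
apply: le_trans (ler_normD _ _) _; apply: lerD.
  by rewrite distrC horner_sub0_le.
rewrite -sumrB; apply: le_trans (ler_norm_sum _ _ _) _.
set S := \sum_l slope_bound _; have -> : r * (n%:R * S) = \sum_(i < n) r * S.
  by rewrite sumr_const card_ord mulrCA mulr_natl.
apply: ler_sum => i _.
apply: le_trans (horner_shift_le _ (le_trans (near i) r1)) _.
apply: ler_pM => //; first exact: slope_bound_ge0.
rewrite /S (bigD1 (m i)) //= lerDl.
by apply: sumr_ge0 => ? _; exact: slope_bound_ge0.
Qed.

(* The power sums determine, through the Lagrange indicators, how many of the
   [t i] sit near each value of [om]; these counts are integers depending
   continuously on [x], hence equal to their values at [x = 0]. *)
Lemma power_sums_perm_close (u : nat -> {poly C}) :
  (forall m, (u m).[0] = \sum_l om l ^+ m) ->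
  exists2 delta : C, 0 < delta & forall x r (t : 'I_n -> C),
    0 <= r -> `|x| + r < delta ->
    (forall m, (u m).[x] = \sum_i t i ^+ m) ->
    (forall i, exists l, `|t i - om l| <= r) ->
    exists s : 'S_n, forall l, `|t (s l) - om l| <= r.
Proof.
move=> u0; pose g l0 := lagrange_indicator (om l0).
pose K1 l0 := slope_bound (\sum_(m < size (g l0)) (g l0)`_m *: u m).
pose K2 l0 := n%:R * \sum_l slope_bound (g l0 \Po ('X + (om l)%:P)).
have K2_ge0 l0 : 0 <= K2 l0.
  by rewrite mulr_ge0 ?sumr_ge0 // => l _; exact: slope_bound_ge0.
pose K := \sum_l0 (K1 l0 + K2 l0).
have K_ge l0 : K1 l0 <= K /\ K2 l0 <= K.
  have K12 : K1 l0 + K2 l0 <= K.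
    rewrite /K (bigD1 l0) //= lerDl; apply: sumr_ge0 => i _.
    by rewrite addr_ge0 ?slope_bound_ge0.
  by split; apply: le_trans K12; rewrite ?lerDl ?lerDr ?slope_bound_ge0.
have K_ge0 : 0 <= K.
  by apply: sumr_ge0 => l0 _; rewrite addr_ge0 ?slope_bound_ge0.
exists (1 + K)^-1 => [|x r t r0]; first by rewrite invr_gt0 ltr_wpDr.
rewrite -div1r ltr_pdivlMr ?ltr_wpDr // mulrDr mulr1 => small ux near.
have xrK : (`|x| + r) * K < 1.
  by apply: le_lt_trans small; rewrite lerDr addr_ge0.
have xr1 : `|x| + r <= 1.
  by apply: le_trans (ltW small); rewrite lerDl mulr_ge0 ?addr_ge0.
have [m near_m] := fin_all_exists near.
suff [s ms] : exists s : 'S_n, forall l, om (m (s l)) = om l.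
  by exists s => l; rewrite -ms; exact: near_m.
apply: (@perm_of_fibres _ _ om (fun i => om (m i))) => [i|l0].
  by exists (m i).
apply/(@natr_inj_norm_lt1 C).
rewrite -(sum_lagrange_indicator id) -(sum_lagrange_indicator m).
apply: le_lt_trans (sum_horner_close _ u0 ux near_m _ _) _.
- by apply: le_trans xr1; rewrite lerDl.
- by apply: le_trans xr1; rewrite lerDr.
apply: le_lt_trans xrK; rewrite mulrDl.
by case: (K_ge l0) => ? ?; rewrite lerD // ler_wpM2l.
Qed.

End PowerSumPerturbation.

Local Open Scope complex_scope.

Section NoisyRotation.
Variable R : realType.
Local Notation C := R[i].

Lemma e2piD (a b : R) : e2pi (a + b) = e2pi a * e2pi b.
Proof. by rewrite /e2pi mulrDr cosD sinD /=; congr Complex; rewrite addrC. Qed.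

Lemma e2pi0 : e2pi (0 : R) = 1.
Proof. by rewrite /e2pi mulr0 cos0 sin0. Qed.

Lemma norm_e2pi (a : R) : `|e2pi a| = 1.
Proof.
rewrite (_ : `|e2pi a| = (ComplexField.Normc.normc (e2pi a))%:C) //.
by rewrite /e2pi /ComplexField.Normc.normc cos2Dsin2 sqrtr1.
Qed.

Lemma ger0_complexRe (z : C) : 0 <= z -> z = (complex.Re z)%:C.
Proof. by move=> z0; rewrite [LHS]complexE (ger0_Im z0) mulr0 addr0. Qed.

Variables (N : nat) (alpha : 'I_N -> R) (Wdot : 'M[R]_N) (k : int).

Definition phase (j : 'I_N) : C := e2pi (- (k%:~R * alpha j)).

(* On the Fourier mode [f j * e(k x)], the transfer operator acts as
   [f |-> f *m mode_matrix eps] on row vectors. *)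
Definition mode_matrix (eps : R) : 'M[C]_N :=
  \matrix_(i, j) ((Weps Wdot eps j i)%:C * phase j).

Lemma transfer_sep_fun eps (v : 'rV[C]_N) :
  transfer alpha (Weps Wdot eps) (sep_fun k (fun j => v 0 j)) =
  sep_fun k (fun j => (v *m mode_matrix eps) 0 j).
Proof.
apply: funext => j; apply: funext => x.
rewrite /transfer /sep_fun !mxE mulr_suml; apply: eq_bigr => a _.
rewrite !mxE mulrBr -addrC e2piD /phase; set u := e2pi _; set w := e2pi _.
ring.
Qed.

Lemma iter_transfer_sep_fun eps lam (v : 'rV[C]_N) m :
  iter m (fun G : Mfun R N => fun j x =>
      transfer alpha (Weps Wdot eps) G j x - lam * G j x)
    (sep_fun k (fun j => v 0 j))
  = sep_fun k (fun j => (v *m (mode_matrix eps - lam%:M) ^+ m) 0 j).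
Proof.
elim: m => [|m IH] /=; first by rewrite expr0 (_ : 1 = 1%:M) // mulmx1.
rewrite IH transfer_sep_fun; apply: funext => j; apply: funext => x.
rewrite /sep_fun exprSr -mulmxE mulmxA mulmxBr mul_mx_scalar !mxE; ring.
Qed.

Lemma mode_spectrum_of_geigen_basis eps (t : 'I_N -> C) (P : 'M[C]_N) :
  P \in unitmx -> (forall i, row i P *m (mode_matrix eps - (t i)%:M) ^+ N = 0) ->
  mode_spectrum alpha Wdot eps k t (fun l j => P l j).
Proof.
move=> Pu Pgeigen; have Pfree := Pu; rewrite -row_free_unit in Pfree.
split=> [l|c hc l]; first split.
- have /rV_neq0_coord [j Plj] := row_unitmx_neq0 l Pu.
  by exists j, 0; rewrite /sep_fun mulr0 e2pi0 mulr1; rewrite mxE in Plj.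
- exists N; split=> [|j x]; first exact: leq_ltn_trans (leq0n l) (ltn_ord l).
  have -> : sep_fun k (fun j => P l j) = sep_fun k (fun j => row l P 0 j).
    by apply: funext => ?; apply: funext => ?; rewrite /sep_fun mxE.
  by rewrite iter_transfer_sep_fun Pgeigen /sep_fun mxE mul0r.
have : \row_l c l *m P == 0.
  apply/eqP/rowP => j; rewrite !mxE -[RHS](hc j 0); apply: eq_bigr => l' _.
  by rewrite mxE /sep_fun mulr0 e2pi0 mulr1.
by rewrite mulmx_free_eq0 // => /eqP /rowP /(_ l); rewrite !mxE.
Qed.

(* A Gershgorin disc argument at the largest coordinate of an eigenvector;
   the zero row sums make the disc radius equal to [eps * `|Wdot j j|]. *)
Lemma eigenvalue_mode_matrix_near eps lam : 0 <= eps ->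
  (forall i j, i != j -> 0 <= Wdot i j) -> (forall i, \sum_j Wdot i j = 0) ->
  eigenvalue (mode_matrix eps) lam ->
  exists j, `|lam - phase j| <= (2 * eps * `|Wdot j j|)%:C.
Proof.
move=> eps0 Woff Wrow /eigenvalueP [v vB vn0].
have Woff_ge0 j a : a != j -> 0 <= eps * Wdot j a.
  by move=> aj; rewrite mulr_ge0 // Woff // eq_sym.
have [j0 vj0] := rV_neq0_coord vn0.
have [j _ jmax] := @real_arg_maxP _ _ j0 predT (fun a => `|v 0 a|) isT
  (fun i _ => normr_real _).
exists j; have vj : 0 < `|v 0 j|.
  by apply: lt_le_trans (jmax j0 isT); rewrite normr_gt0.
have [Wjj Woff_sum] : Wdot j j = - `|Wdot j j| /\
    \sum_(a | a != j) eps * Wdot j a = eps * `|Wdot j j|.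
  have := Wrow j; rewrite (bigD1 j) //= => /eqP; rewrite addr_eq0 => /eqP ->.
  rewrite normrN ger0_norm ?mulr_sumr //.
  by apply: sumr_ge0 => a aj; rewrite Woff // eq_sym.
pose mu := (1 + eps * Wdot j j)%:C * phase j.
have eq_j : (lam - mu) * v 0 j =
    \sum_(a | a != j) v 0 a * ((eps * Wdot j a)%:C * phase j).
  move/rowP: vB => /(_ j); rewrite !mxE (bigD1 j) //= !mxE eqxx mulr1n => vBj.
  rewrite mulrBl -vBj /mu [_ * v 0 j]mulrC addrC addrK.
  by apply: eq_bigr => a aj; rewrite !mxE eq_sym (negbTE aj) add0r.
have lam_mu : `|lam - mu| <= (eps * `|Wdot j j|)%:C.
  rewrite -(ler_pM2r vj) -normrM eq_j -Woff_sum rmorph_sum mulr_suml.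
  apply: le_trans (ler_norm_sum _ _ _) _; apply: ler_sum => a aj.
  rewrite !normrM norm_e2pi mulr1 (@ger0_norm _ (_ * _)%:C) ?ler0c ?Woff_ge0 //.
  rewrite mulrC.
  by rewrite ler_wpM2l ?ler0c ?Woff_ge0 //; exact: jmax.
have mu_phase : `|mu - phase j| = (eps * `|Wdot j j|)%:C.
  rewrite /mu -[X in _ - X]mul1r -mulrBl normrM norm_e2pi mulr1 [in LHS]Wjj.
  rewrite mulrN rmorphD rmorph1 addrC addKr rmorphN normrN.
  by rewrite ger0_norm // ler0c mulr_ge0.
rewrite -(subrK mu lam) -addrA; apply: le_trans (ler_normD _ _) _.
have -> : 2 * eps * `|Wdot j j| = eps * `|Wdot j j| + eps * `|Wdot j j| by ring.
by rewrite mu_phase rmorphD lerD2r.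
Qed.

Definition mode_matrix_poly : 'M[{poly C}]_N :=
  \matrix_(i, j) (((j == i)%:R + 'X * ((Wdot j i)%:C)%:P) * (phase j)%:P).

Lemma horner_mode_matrix_poly eps :
  map_mx (horner_eval eps%:C) mode_matrix_poly = mode_matrix eps.
Proof.
apply/matrixP => i j; rewrite !mxE /= horner_evalE !hornerE.
by rewrite rmorphD rmorphM /= rmorph_nat hornerMn hornerE.
Qed.

Lemma trace_mode_matrix0 m : \tr (mode_matrix 0 ^+ m) = \sum_j phase j ^+ m.
Proof.
have entries i j : mode_matrix 0 i j = (j == i)%:R * phase j.
  by rewrite !mxE mul0r addr0 rmorph_nat.
have trig0 : is_trig_mx (mode_matrix 0).
  apply/is_trig_mxP => i j ij.
  by rewrite entries (_ : j == i = false) ?mul0r //; exact: gtn_eqF.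
have [_ diag0] := trig_mxexp m trig0.
by apply: eq_bigr => i _; rewrite diag0 entries eqxx mul1r.
Qed.

Lemma horner_trace_mode_matrix_poly eps m :
  (\tr (mode_matrix_poly ^+ m)).[eps%:C] = \tr (mode_matrix eps ^+ m).
Proof. by rewrite horner_trace_exp horner_mode_matrix_poly. Qed.

Lemma geigenvalue_mode_matrix_near eps lam (v : 'rV[C]_N) m : 0 <= eps ->
  (forall i j, i != j -> 0 <= Wdot i j) -> (forall i, \sum_j Wdot i j = 0) ->
  v != 0 -> v *m (mode_matrix eps - lam%:M) ^+ m = 0 ->
  exists j,
    `|lam - phase j| <= (2 * \big[Num.max/0]_(i < N) `|Wdot i i| * eps)%:C.
Proof.
move=> eps0 Woff Wrow vn0 /(eigenvalue_geigenvector vn0) ev.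
have [j near_j] := eigenvalue_mode_matrix_near eps0 Woff Wrow ev.
exists j; apply: le_trans near_j _; rewrite lecR.
have : `|Wdot j j| <= \big[Num.max/0]_(i < N) `|Wdot i i| by exact: le_bigmax.
nra.
Qed.

End NoisyRotation.

Theorem proposition2p2 (R : realType) (N : nat) (hN : (0 < N)%N)
  (alpha : 'I_N -> R) (Wdot : 'M[R]_N)
  (hsym : Wdot^T = Wdot)
  (hoff : forall i j : 'I_N, i != j -> 0 <= Wdot i j)
  (hrow : forall i : 'I_N, \sum_(j < N) Wdot i j = 0)
  (k : int) :
  (forall eps : R, 0 < eps ->
     exists (lam : 'I_N -> R[i]) (f : 'I_N -> 'I_N -> R[i]),
       mode_spectrum alpha Wdot eps k lam f)
  /\
  (exists eps0 : R, 0 < eps0 /\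
     forall eps : R, 0 < eps -> eps < eps0 ->
       exists (lam : 'I_N -> R[i]) (f : 'I_N -> 'I_N -> R[i]),
         mode_spectrum alpha Wdot eps k lam f /\
         forall l : 'I_N,
           `|lam l - e2pi (- (k%:~R * alpha l))|
             <= (2 * \big[Num.max/0]_(m < N) `|Wdot m m| * eps)%:C).
Proof.
case: N hN alpha Wdot hsym hoff hrow => [//|n] _ alpha Wdot _ hoff hrow.
split=> [eps _|].
  have [t [P [Pu Pgeigen _]]] := geigen_basis (mode_matrix alpha Wdot k eps).
  by exists t, (fun l j => P l j); exact: mode_spectrum_of_geigen_basis.
set Mx := \big[Num.max/0]_(m < n.+1) `|Wdot m m|.
have Mx0 : 0 <= Mx.
  by apply: le_trans (normr_ge0 (Wdot ord0 ord0)) _; exact: le_bigmax.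
pose u m := \tr (mode_matrix_poly alpha Wdot k ^+ m).
have u0 m : (u m).[0] = \sum_l phase alpha k l ^+ m.
  by rewrite -(trace_mode_matrix0 _ Wdot) -horner_trace_mode_matrix_poly.
have [delta delta0 perm_close] := power_sums_perm_close u0.
have [d d0 deltaE] : exists2 d, 0 < d & delta = d%:C.
  by exists (complex.Re delta); rewrite -?ltcR -ger0_complexRe ?ltW.
rewrite {}deltaE {delta delta0} in perm_close.
exists (d / (1 + 2 * Mx)); split => [|eps eps0 small].
  by rewrite divr_gt0 // ltr_wpDr ?mulr_ge0.
have [t [P [Pu Pgeigen trP]]] := geigen_basis (mode_matrix alpha Wdot k eps).
have [|||i|s near_s] := perm_close eps%:C (2 * Mx * eps)%:C t.
- by rewrite ler0c !mulr_ge0 // ltW.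
- rewrite ger0_norm ?ler0c ?(ltW eps0) // -rmorphD ltcR.
  by move: small; rewrite ltr_pdivlMr ?ltr_wpDr ?mulr_ge0 //; nra.
- by move=> m; rewrite horner_trace_mode_matrix_poly trP.
- exact: geigenvalue_mode_matrix_near (ltW eps0) hoff hrow (row_unitmx_neq0 i Pu)
    (Pgeigen i).
exists (fun l => t (s l)), (fun l j => row_perm s P l j); split => //.
apply: mode_spectrum_of_geigen_basis => [|l].
  by rewrite row_permE unitmx_mul unitmx_perm.
by rewrite row_permEsub row_rowsub Pgeigen.
Qed.
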